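(* The sequence $\{k^2+k\}_{k=0}^{\infty}$ is a Legendre multiplier sequence.
   Context: The Legendre polynomials $\mathfrak{Le}_n(x)$ are defined by $\frac{1}{\sqrt{1-2xt+t^2}}=\sum_{k=0}^{\infty}\mathfrak{Le}_k(x)t^k$. A real sequence $\{\gamma_k\}_{k=0}^{\infty}$ is a Legendre multiplier sequence if, for every $n$ and all real $a_0,\dots,a_n$, the polynomial $\sum_{k=0}^n a_k\gamma_k\mathfrak{Le}_k(x)$ has only real zeros whenever $\sum_{k=0}^n a_k\mathfrak{Le}_k(x)$ has only real zeros. *)

From HB Require Import structures.
From mathcomp Require Import all_boot all_order all_algebra.
From mathcomp Require Import complex.
Import ComplexField.
Set Implicit Arguments. Unset Strict Implicit. Unset Printing Implicit Defensive.
Import Order.TTheory GRing.Theory Num.Theory.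
Local Open Scope ring_scope.

(* Legendre polynomials, via Bonnet's recurrence, which is equivalent to the
   generating function 1/sqrt(1-2xt+t^2) = sum_k Le_k(x) t^k:
   Le_0 = 1, Le_1 = X, (n+2) Le_{n+2} = (2n+3) X Le_{n+1} - (n+1) Le_n. *)
Fixpoint legendre_pair (R : fieldType) (n : nat) : {poly R} * {poly R} :=
  match n with
  | 0 => (1, 'X)
  | m.+1 =>
      let (p, q) := legendre_pair R m in
      (q, (m.+2%:R)^-1 *: ((m.*2.+3)%:R *: ('X * q) - (m.+1)%:R *: p))
  end.

Definition legendre (R : fieldType) (n : nat) : {poly R} := (legendre_pair R n).1.

Definition only_real_zeros (R : rcfType) (p : {poly R}) : Prop :=
  p = 0 \/ forall z : R[i], root (map_poly (fun r : R => (r%:C)%C) p) z -> Im z = 0.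

Definition legendre_multiplier_sequence (R : rcfType) (gamma : nat -> R) : Prop :=
  forall (n : nat) (a : nat -> R),
    only_real_zeros (\sum_(k < n.+1) a k *: legendre R k) ->
    only_real_zeros (\sum_(k < n.+1) (a k * gamma k) *: legendre R k).

From mathcomp Require Import all_boot all_order all_algebra.
From mathcomp Require Import complex ring.
Set Implicit Arguments. Unset Strict Implicit. Unset Printing Implicit Defensive.
Import Order.TTheory GRing.Theory Num.Theory.
Local Open Scope ring_scope.

(* The Legendre polynomials satisfy ((x^2 - 1) P_k')' = k (k + 1) P_k, so
   multiplying the Legendre coefficients of p by k^2 + k produces
   ((x^2 - 1) p')'.  Real-rootedness survives differentiation: if every root w
   of q is real and z is not, then Im (q'/q)(z) = sum_w Im (z - w)^-1 has the
   sign opposite to Im z, so q'(z) <> 0.  It also survives multiplication by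
   x^2 - 1, whose roots are 1 and -1. *)

Section LogDerivative.
Variable F : fieldType.

Lemma deriv_prod_XsubC_horner (s : seq F) (z : F) : z \notin s ->
  (\prod_(w <- s) ('X - w%:P))^`().[z] =
  (\prod_(w <- s) ('X - w%:P)).[z] * \sum_(w <- s) (z - w)^-1.
Proof.
elim: s => [|w s IH]; first by rewrite !big_nil derivC !hornerC mul1r.
rewrite inE negb_or => /andP[zw /IH {}IH].
have zw0 : z - w != 0 by rewrite subr_eq0.
rewrite !big_cons derivM derivXsubC mul1r !hornerE IH.
by field.
Qed.

End LogDerivative.

Section NumClosed.
Variable C : numClosedFieldType.
Implicit Types (z w : C) (s : seq C).

Lemma Im_invB_mul_lt0 z w : 'Im w = 0 -> 'Im z != 0 -> 'Im ((z - w)^-1) * 'Im z < 0.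
Proof.
move=> Imw0 Imz0.
have zw0 : z - w != 0.
  by apply: contraNneq Imz0 => /eqP; rewrite subr_eq0 => /eqP ->; apply/eqP.
rewrite ImV raddfB /= Imw0 subr0 mulrAC !mulNr oppr_lt0 -expr2.
by rewrite -real_normK ?Creal_Im // divr_gt0 // exprn_gt0 // normr_gt0.
Qed.

Lemma Im_sum_invB_mul_lt0 s z : s != [::] -> (forall w, w \in s -> 'Im w = 0) ->
  'Im z != 0 -> 'Im (\sum_(w <- s) (z - w)^-1) * 'Im z < 0.
Proof.
case: s => [//|w s] _ s_real Imz0.
rewrite raddf_sum mulr_suml big_cons big_seq -[X in _ < X](addr0 0).
apply: ltr_leD; first by apply: Im_invB_mul_lt0 => //; apply: s_real; rewrite mem_head.
apply: sumr_le0 => u su; rewrite ltW // Im_invB_mul_lt0 //.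
by apply: s_real; rewrite inE su orbT.
Qed.

Lemma deriv_real_roots (q : {poly C}) : q^`() != 0 ->
  (forall z, root q z -> 'Im z = 0) -> forall z, root q^`() z -> 'Im z = 0.
Proof.
move=> dq0 q_real z dqz; have [s qE] := closed_field_poly_normal q.
have lc0 : lead_coef q != 0.
  by rewrite lead_coef_eq0; apply: contraNneq dq0 => ->; rewrite deriv0.
have s_real w : w \in s -> 'Im w = 0.
  by move=> ws; apply: q_real; rewrite qE rootZ // root_prod_XsubC.
have s0 : s != [::].
  by apply: contraNneq dq0 => s0; rewrite qE s0 big_nil derivZ derivC scaler0.
have [//|Imz0] := eqVneq ('Im z) 0.
have zs : z \notin s by apply: contra Imz0 => /s_real ->.
have Qz0 : (\prod_(w <- s) ('X - w%:P)).[z] != 0 by rewrite -rootE root_prod_XsubC.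
have := Im_sum_invB_mul_lt0 s0 s_real Imz0.
move: dqz; rewrite qE derivZ rootZ // => /rootP.
rewrite deriv_prod_XsubC_horner // => /eqP; rewrite mulf_eq0 (negPf Qz0) /= => /eqP ->.
by rewrite raddf0 mul0r ltxx.
Qed.

End NumClosed.

Section Legendre.
Variable R : rcfType.
Local Notation P := (legendre R).

Lemma natr_poly_neq0 n : (n.+1%:R : {poly R}) != 0.
Proof. by rewrite -polyC_natr polyC_eq0 pnatr_eq0. Qed.

Lemma legendreSS n :
  n.+2%:R * P n.+2 = n.*2.+3%:R * ('X * P n.+1) - n.+1%:R * P n.
Proof.
rewrite /legendre /=; case: (legendre_pair R n) => p q /=.
by rewrite !mulr_natl -!scaler_nat scalerA mulfV ?scale1r // pnatr_eq0.
Qed.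

Lemma deriv_mulr_natl m (p : {poly R}) : (m%:R * p)^`() = m%:R * p^`().
Proof. by rewrite !mulr_natl derivMn. Qed.

(* Stated together because each induction step uses both. *)
Lemma legendre_deriv_rec n :
  (P n.+1)^`() = 'X * (P n)^`() + n.+1%:R * P n /\
  'X * (P n.+1)^`() - (P n)^`() = n.+1%:R * P n.+1.
Proof.
elim: n => [|n [derivS derivXS]].
  by rewrite /legendre /= derivX derivC mulr0 add0r !mulr1 subr0 mul1r.
have derivSS : n.+2%:R * (P n.+2)^`() =
    n.*2.+3%:R * (P n.+1 + 'X * (P n.+1)^`()) - n.+1%:R * (P n)^`().
  by rewrite -deriv_mulr_natl legendreSS derivB !deriv_mulr_natl derivM derivX mul1r.
have twice_natr : n.*2.+3%:R = n.+1%:R + n.+2%:R :> {poly R}.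
  by rewrite -natrD -addnn !addnS !addSn.
have derivS' : (P n.+2)^`() = 'X * (P n.+1)^`() + n.+2%:R * P n.+1.
  apply: (mulfI (natr_poly_neq0 n.+1)); rewrite derivSS twice_natr.
  have -> : (P n)^`() = 'X * (P n.+1)^`() - n.+1%:R * P n.+1 by rewrite -derivXS; ring.
  ring.
split=> //; rewrite derivS'.
transitivity ('X * ('X * (P n.+1)^`() - (P n)^`()) - ((P n.+1)^`() - 'X * (P n)^`())
    + n.+2%:R * ('X * P n.+1)); first ring.
rewrite derivXS derivS legendreSS twice_natr; ring.
Qed.

Lemma legendre_ode k :
  (('X ^+ 2 - 1) * (P k)^`())^`() = (k ^ 2 + k)%N%:R * P k.
Proof.
case: k => [|n]; first by rewrite /legendre /= derivC mulr0 derivC mul0r.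
have [derivS derivXS] := legendre_deriv_rec n.
have -> : ('X ^+ 2 - 1) * (P n.+1)^`() = n.+1%:R * ('X * P n.+1 - P n).
  transitivity ('X * ('X * (P n.+1)^`() - (P n)^`()) - ((P n.+1)^`() - 'X * (P n)^`()));
    first ring.
  by rewrite derivXS derivS; ring.
rewrite deriv_mulr_natl derivB derivM derivX mul1r.
have -> : P n.+1 + 'X * (P n.+1)^`() - (P n)^`() = n.+2%:R * P n.+1.
  by rewrite -addrA derivXS; ring.
by rewrite -mulnSr natrM mulrA.
Qed.

End Legendre.

Section RealZeros.
Variable R : rcfType.

Lemma only_real_zeros_deriv (p : {poly R}) :
  only_real_zeros p -> only_real_zeros p^`().
Proof.
case=> [->|p_real]; first by left; rewrite deriv0.
have [->|dp0] := eqVneq p^`() 0; [by left | right] => z.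
rewrite -deriv_map; apply: (deriv_real_roots _ p_real).
by rewrite deriv_map map_poly_eq0.
Qed.

Lemma only_real_zeros_mulX2B1 (p : {poly R}) :
  only_real_zeros p -> only_real_zeros (('X ^+ 2 - 1) * p).
Proof.
case=> [->|p_real]; [by left; rewrite mulr0 | right] => z.
rewrite rmorphM rmorphB rmorphXn /= map_polyX rmorph1 rootM => /orP[|/p_real //].
rewrite /root !hornerE.
have -> : z ^+ 2 - 1 = (z - 1) * (z + 1) by ring.
rewrite mulf_eq0 subr_eq0 addr_eq0 => /orP[]/eqP->.
all: by apply/Creal_ImP; rewrite ?realN real1.
Qed.

Lemma sum_legendre_ode n (a : nat -> R) :
  \sum_(k < n.+1) (a k * (k ^ 2 + k)%N%:R) *: legendre R k =
  (('X ^+ 2 - 1) * (\sum_(k < n.+1) a k *: legendre R k)^`())^`().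
Proof.
rewrite linear_sum mulr_sumr linear_sum; apply: eq_bigr => k _ /=.
by rewrite derivZ -scalerAr derivZ legendre_ode -scalerA scaler_nat mulr_natl.
Qed.

End RealZeros.

Theorem lemma4p6 (R : rcfType) :
  legendre_multiplier_sequence (fun k : nat => ((k ^ 2 + k)%N)%:R : R).
Proof.
move=> n a real_zeros; rewrite sum_legendre_ode.
by apply/only_real_zeros_deriv/only_real_zeros_mulX2B1/only_real_zeros_deriv.
Qed.
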